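(* Let $n\ge 2$, let $k_1,\dots,k_n$ be positive integers with $\sum_{i=1}^n\frac1{k_i}=1$, $k=\operatorname{lcm}(k_1,\dots,k_n)$, $w_i=k/k_i$, and $P(x_1,\dots,x_{n-1})=\sum_{i=1}^{n-1}x_i^{k_i}+1$. Fix $\epsilon_1,\dots,\epsilon_{n-1}>0$ and let $C_\epsilon=\{|x_1|=\epsilon_1,\dots,|x_{n-1}|=\epsilon_{n-1}\}$. Let $\psi\in\mathbb{C}$ with $\xi=\psi^{-1}$ satisfying $|\xi|\cdot\sup_{C_\epsilon}\big|\frac{P}{k x_1\cdots x_{n-1}}\big|<1$, and set $$\tilde M=\exp\Big(-\frac{1}{(2\pi i)^{n-1}}\oint_{C_\epsilon}\Big[\log\psi+\log\Big(1-\xi\frac{P(x_1,\dots,x_{n-1})}{k x_1\cdots x_{n-1}}\Big)\Big]\frac{dx_1}{x_1}\cdots\frac{dx_{n-1}}{x_{n-1}}\Big),$$ with the principal branch for the second logarithm. Then $$\tilde M=\xi\exp\Big(\sum_{m\ge1}c_m\frac{\xi^m}{mk^m}\Big),\qquad c_m=\begin{cases}\dfrac{m!}{\prod_{i=1}^n (m/k_i)!},& k\mid m,\\[2mm] 0,&\text{otherwise},\end{cases}$$ where $c_m$ is the coefficient of $x_1^m\cdots x_{n-1}^m$ in $P^m$. Consequently, with $z=\xi^k/k^k$, one has $\tilde M^k/k^k=z\exp\big(\sum_{m\ge1}\frac{(km)!}{\prod_{i=1}^n(w_im)!}\frac{z^m}{m}\big)$, which is independent of $\epsilon_1,\dots,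\epsilon_{n-1}$.
   Context: The value of $\exp(-\log\psi)=\psi^{-1}$ does not depend on the branch chosen for $\log\psi$. *)

From Stdlib Require Import Reals Lra List Arith.
Open Scope R_scope.

Definition CC : Type := (R * R)%type.
Definition RtoC (r : R) : CC := (r, 0).
Definition Czero : CC := (0, 0).
Definition Cone : CC := (1, 0).
Definition Cadd (z w : CC) : CC := (fst z + fst w, snd z + snd w).
Definition Copp (z : CC) : CC := (- fst z, - snd z).
Definition Csub (z w : CC) : CC := Cadd z (Copp w).
Definition Cmul (z w : CC) : CC :=
  (fst z * fst w - snd z * snd w, fst z * snd w + snd z * fst w).
Definition Cinv (z : CC) : CC :=
  (fst z / (fst z * fst z + snd z * snd z),
   - snd z / (fst z * fst z + snd z * snd z)).
Definition Cdiv (z w : CC) : CC := Cmul z (Cinv w).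
Fixpoint Cpow (z : CC) (m : nat) : CC :=
  match m with O => Cone | S m' => Cmul z (Cpow z m') end.
Definition Cnorm (z : CC) : R := sqrt (fst z * fst z + snd z * snd z).
Definition Cexp (z : CC) : CC := (exp (fst z) * cos (snd z), exp (fst z) * sin (snd z)).
(** principal argument, in (-PI, PI] *)
Definition Arg (z : CC) : R :=
  let x := fst z in let y := snd z in
  if Rlt_dec 0 x then atan (y / x)
  else if Rlt_dec x 0 then
    (if Rle_dec 0 y then atan (y / x) + PI else atan (y / x) - PI)
  else if Rlt_dec 0 y then PI / 2
  else if Rlt_dec y 0 then - (PI / 2) else 0.
Definition CLog (z : CC) : CC := (ln (Cnorm z), Arg z).

Definition Csum (l : list CC) : CC := fold_right Cadd Czero l.
Definition Cprod (l : list CC) : CC := fold_right Cmul Cone l.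

Definition Ccv (u : nat -> CC) (l : CC) : Prop :=
  forall e : R, 0 < e -> exists N0 : nat, forall N : nat, (N0 <= N)%nat ->
    Cnorm (Csub (u N) l) < e.

Definition Cseries1 (a : nat -> CC) (S : CC) : Prop :=
  Ccv (fun N => Csum (map a (seq 1 N))) S.

(** Sum of F over all a : nat -> nat with a j < N for j < d
    (the values a j for j >= d are 0). *)
Fixpoint gridsum (d N : nat) (F : (nat -> nat) -> CC) : CC :=
  match d with
  | O => F (fun _ => O)
  | S d' => Csum (map (fun a =>
              gridsum d' N (fun b => F (fun j => if Nat.eqb j d' then a else b j)))
              (seq 0 N))
  end.

Definition torus_pt (eps : nat -> R) (N : nat) (a : nat -> nat) : nat -> CC :=
  fun j => Cmul (RtoC (eps j)) (Cexp (0, 2 * PI * INR (a j) / INR N)).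

(** Uniform-grid Riemann sum (with N^d cells) of
    (1/(2 pi i)^d) \oint_{C_eps} g(x) dx_1/x_1 ... dx_d/x_d
    = (1/(2 pi)^d) \int_{[0,2pi]^d} g(eps e^{i theta}) dtheta. *)
Definition torus_riemann_sum (d : nat) (eps : nat -> R) (g : (nat -> CC) -> CC) (N : nat) : CC :=
  Cmul (RtoC (/ (INR N ^ d))) (gridsum d N (fun a => g (torus_pt eps N a))).

(** The normalized contour integral (1/(2 pi i)^d) \oint_{C_eps} g dx/x equals I:
    I is the limit of the Riemann sums. *)
Definition torus_integral_is (d : nat) (eps : nat -> R) (g : (nat -> CC) -> CC) (I : CC) : Prop :=
  Ccv (torus_riemann_sum d eps g) I.

(** * The data of the theorem (indices shifted to start at 0:
      k_1..k_n  ~  k 0 .. k (n-1);  x_1..x_{n-1} ~ x 0 .. x (n-2)). *)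

Definition lcmk (n : nat) (k : nat -> nat) : nat :=
  fold_right Nat.lcm 1%nat (map k (seq 0 n)).

Definition Ppoly (n : nat) (k : nat -> nat) (x : nat -> CC) : CC :=
  Cadd (Csum (map (fun j => Cpow (x j) (k j)) (seq 0 (n - 1)))) Cone.

Definition Pratio (n : nat) (k : nat -> nat) (x : nat -> CC) : CC :=
  Cdiv (Ppoly n k x)
       (Cmul (RtoC (INR (lcmk n k))) (Cprod (map x (seq 0 (n - 1))))).

Definition cm (n : nat) (k : nat -> nat) (m : nat) : R :=
  if Nat.eqb (m mod (lcmk n k)) 0
  then INR (fact m) / fold_right Rmult 1 (map (fun i => INR (fact (m / k i))) (seq 0 n))
  else 0.

Definition wt (n : nat) (k : nat -> nat) (i : nat) : nat := (lcmk n k / k i)%nat.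

Definition dm (n : nat) (k : nat -> nat) (m : nat) : R :=
  INR (fact (lcmk n k * m)) /
  fold_right Rmult 1 (map (fun i => INR (fact (wt n k i * m))) (seq 0 n)).

(* With u := P / (k x_1 ... x_(n-1)) we have |xi u| <= q < 1 on the torus, so
   log (1 - xi u) = - sum_m (xi u)^m / m with a geometric tail bound, and the normalised integral
   of L + log (1 - xi u) is L - sum_m xi^m [x^0](u^m) / m.  The constant term of u^m is c_m / k^m:
   in (1 + sum_j x_j^(k_j))^m the monomial x_1^m ... x_(n-1)^m needs k_j | m for j < n - 1, and
   then sum_i 1/k_i = 1 forces k_n | m as well, with multinomial coefficient m! / prod_i (m/k_i)!.
   The torus integral is a limit of Riemann sums over N-th roots of unity, and such a sum integrates
   every Laurent monomial of degree < N exactly; so the term-wise integrals are computed on the grid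
   and only the tail of the logarithmic series has to be estimated.  Since exp (- L) = xi for every
   branch L, exponentiating gives xi exp S, and only the terms m = k j of S are nonzero. *)

From Stdlib Require Import Reals List Arith Lra Lia.
From Coquelicot Require Import Hierarchy Derive AutoDerive.
From Coquelicot Require Complex.
Open Scope R_scope.
Import ListNotations.

Lemma CC_ring_theory : ring_theory Czero Cone Cadd Cmul Csub Copp (@eq CC).
Proof.
  constructor; intros; repeat match goal with z : CC |- _ => destruct z end;
  unfold Csub, Cadd, Cmul, Copp, Czero, Cone; simpl; f_equal; ring.
Qed.

Lemma Cpow_add z a b : Cpow z (a + b) = Cmul (Cpow z a) (Cpow z b).
Proof.
  induction a as [|a IH]; simpl.
  - destruct (Cpow z b); unfold Cmul, Cone; simpl; f_equal; ring.
  - rewrite IH. apply (Rmul_assoc CC_ring_theory).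
Qed.

Lemma Cpow_N_theory : power_theory Cone Cmul (@eq CC) BinNat.N.to_nat Cpow.
Proof.
  constructor. intros z [|p]; [reflexivity|]. unfold BinNat.N.to_nat, pow_N.
  induction p as [p IH|p IH|]; cbn [pow_pos].
  - rewrite Pos2Nat.inj_xI. cbn [Cpow].
    replace (2 * Pos.to_nat p)%nat with (Pos.to_nat p + Pos.to_nat p)%nat by lia.
    now rewrite Cpow_add, IH.
  - rewrite Pos2Nat.inj_xO.
    replace (2 * Pos.to_nat p)%nat with (Pos.to_nat p + Pos.to_nat p)%nat by lia.
    now rewrite Cpow_add, IH.
  - destruct z; simpl; unfold Cmul, Cone; simpl; f_equal; ring.
Qed.

Add Ring CC_ring : CC_ring_theory (power_tac Cpow_N_theory [Rpow_tac]).

Definition Cnorm2 (z : CC) : R := fst z * fst z + snd z * snd z.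

Lemma Cnorm2_pos z : z <> Czero -> 0 < Cnorm2 z.
Proof.
  intros Hz. destruct z as [x y]; unfold Cnorm2; simpl.
  destruct (Req_dec x 0), (Req_dec y 0); subst; [now contradiction Hz | nra ..].
Qed.

Lemma Cinv_l z : z <> Czero -> Cmul (Cinv z) z = Cone.
Proof.
  intros Hz. pose proof (Cnorm2_pos z Hz) as Hn. destruct z as [x y].
  unfold Cnorm2 in Hn; unfold Cmul, Cinv, Cone; simpl in *. f_equal; field; lra.
Qed.

Lemma CC_field_theory : field_theory Czero Cone Cadd Cmul Csub Copp Cdiv Cinv (@eq CC).
Proof.
  constructor.
  - exact CC_ring_theory.
  - intro H; injection H; lra.
  - reflexivity.
  - exact Cinv_l.
Qed.

Add Field CC_field : CC_field_theory.

Lemma RtoC_add a b : RtoC (a + b) = Cadd (RtoC a) (RtoC b).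
Proof. unfold RtoC, Cadd; simpl; f_equal; ring. Qed.
Lemma RtoC_mul a b : RtoC (a * b) = Cmul (RtoC a) (RtoC b).
Proof. unfold RtoC, Cmul; simpl; f_equal; ring. Qed.
Lemma RtoC_pow a m : RtoC (a ^ m) = Cpow (RtoC a) m.
Proof. induction m as [|m IH]; simpl; [reflexivity|]. now rewrite RtoC_mul, IH. Qed.
Lemma RtoC_inv a : RtoC (/ a) = Cinv (RtoC a).
Proof.
  unfold RtoC, Cinv; simpl. destruct (Req_dec a 0) as [->|Ha].
  - unfold Rdiv. now rewrite Rinv_0, Ropp_0, !Rmult_0_l.
  - f_equal; field; auto.
Qed.
Lemma RtoC_neq0 a : a <> 0 -> RtoC a <> Czero.
Proof. intros H E; injection E; auto. Qed.

Lemma Cdiv_RtoC z r : Cdiv z (RtoC r) = Cmul z (RtoC (/ r)).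
Proof. now rewrite RtoC_inv. Qed.

Lemma Cmul_neq0 z w : z <> Czero -> w <> Czero -> Cmul z w <> Czero.
Proof.
  intros Hz Hw E. apply Hw. replace w with (Cmul (Cinv z) (Cmul z w)) by (field; auto).
  rewrite E. ring.
Qed.
Lemma Cpow_Cone m : Cpow Cone m = Cone.
Proof. induction m as [|m IH]; simpl; [reflexivity|]. rewrite IH. ring. Qed.
Lemma Cpow_mul z w m : Cpow (Cmul z w) m = Cmul (Cpow z m) (Cpow w m).
Proof. induction m as [|m IH]; simpl; [ring|]. rewrite IH. ring. Qed.
Lemma Cpow_pow z a b : Cpow (Cpow z a) b = Cpow z (a * b).
Proof.
  induction b as [|b IH]; simpl; [now rewrite Nat.mul_0_r|].
  rewrite IH, <- Cpow_add. f_equal. lia.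
Qed.
Lemma Cnorm_Cmod z : Cnorm z = Complex.Cmod z.
Proof. unfold Cnorm, Complex.Cmod. f_equal. simpl. ring. Qed.

Lemma Cnorm_nonneg z : 0 <= Cnorm z.
Proof. apply sqrt_pos. Qed.
Lemma Cnorm_mul z w : Cnorm (Cmul z w) = Cnorm z * Cnorm w.
Proof. rewrite !Cnorm_Cmod. apply Complex.Cmod_mult. Qed.
Lemma Cnorm_triangle z w : Cnorm (Cadd z w) <= Cnorm z + Cnorm w.
Proof. rewrite !Cnorm_Cmod. apply Complex.Cmod_triangle. Qed.
Lemma Cnorm_opp z : Cnorm (Copp z) = Cnorm z.
Proof. rewrite !Cnorm_Cmod. apply Complex.Cmod_opp. Qed.
Lemma Cnorm_RtoC a : Cnorm (RtoC a) = Rabs a.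
Proof. rewrite Cnorm_Cmod. apply Complex.Cmod_R. Qed.
Lemma Cnorm_Czero : Cnorm Czero = 0.
Proof. rewrite <- (Rabs_R0). apply Cnorm_RtoC. Qed.
Lemma Cnorm_Cone : Cnorm Cone = 1.
Proof. rewrite <- (Rabs_R1). apply Cnorm_RtoC. Qed.
Lemma Cnorm_pow z m : Cnorm (Cpow z m) = Cnorm z ^ m.
Proof.
  induction m as [|m IH]; simpl; [apply Cnorm_Cone|]. now rewrite Cnorm_mul, IH.
Qed.
Lemma Cnorm_sub_comm z w : Cnorm (Csub z w) = Cnorm (Csub w z).
Proof. rewrite <- Cnorm_opp. f_equal. ring. Qed.
Lemma Rabs_fst_le_Cnorm z : Rabs (fst z) <= Cnorm z.
Proof. rewrite Cnorm_Cmod. apply Complex.re_le_Cmod. Qed.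
Lemma Cnorm_unit_imag (b : R) : b * b = 1 -> Cnorm (0, b) = 1.
Proof. intros Hb. unfold Cnorm; simpl. rewrite Rmult_0_l, Rplus_0_l, Hb. apply sqrt_1. Qed.
Lemma Rabs_snd_le_Cnorm z : Rabs (snd z) <= Cnorm z.
Proof.
  replace (snd z) with (fst (Cmul z (0, -1))) by (destruct z; simpl; ring).
  rewrite <- (Rmult_1_r (Cnorm z)), <- (Cnorm_unit_imag (-1)), <- Cnorm_mul by ring.
  apply Rabs_fst_le_Cnorm.
Qed.
Lemma Cnorm_le_Rabs_fst_snd z : Cnorm z <= Rabs (fst z) + Rabs (snd z).
Proof.
  destruct z as [x y]; simpl.
  replace (x, y) with (Cadd (RtoC x) (Cmul (0, 1) (RtoC y)))
    by (unfold Cadd, Cmul, RtoC; simpl; f_equal; ring).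
  eapply Rle_trans; [apply Cnorm_triangle|].
  rewrite Cnorm_mul, Cnorm_unit_imag, !Cnorm_RtoC by ring. lra.
Qed.

Lemma Cexp_add z w : Cexp (Cadd z w) = Cmul (Cexp z) (Cexp w).
Proof.
  destruct z as [a b], w as [c d]. unfold Cexp, Cadd, Cmul; simpl.
  rewrite exp_plus, cos_plus, sin_plus. f_equal; ring.
Qed.
Lemma Cexp_0 : Cexp Czero = Cone.
Proof. unfold Cexp, Czero, Cone; simpl. rewrite exp_0, cos_0, sin_0. f_equal; ring. Qed.
Lemma Cexp_opp_mul z : Cmul (Cexp (Copp z)) (Cexp z) = Cone.
Proof. rewrite <- Cexp_add, <- Cexp_0. f_equal. ring. Qed.
Lemma Cexp_neq0 z : Cexp z <> Czero.
Proof.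
  intro E. pose proof (Cexp_opp_mul z) as H. rewrite E in H.
  unfold Cmul, Czero, Cone in H; simpl in H. injection H; lra.
Qed.
Lemma Cexp_opp z : Cexp (Copp z) = Cinv (Cexp z).
Proof.
  pose proof (Cexp_opp_mul z). pose proof (Cexp_neq0 z).
  replace (Cexp (Copp z)) with (Cmul (Cmul (Cexp (Copp z)) (Cexp z)) (Cinv (Cexp z)))
    by (field; auto).
  rewrite H. ring.
Qed.
Lemma Cexp_pow z m : Cpow (Cexp z) m = Cexp (Cmul (RtoC (INR m)) z).
Proof.
  induction m as [|m IH].
  - change (RtoC (INR 0)) with Czero. cbn [Cpow]. rewrite <- Cexp_0. f_equal. ring.
  - simpl Cpow. rewrite IH, <- Cexp_add, S_INR, RtoC_add. change (RtoC 1) with Cone. f_equal. ring.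
Qed.

Definition Cis (t : R) : CC := Cexp (0, t).

Lemma Cis_eq t : Cis t = (cos t, sin t).
Proof. unfold Cis, Cexp; simpl. rewrite exp_0. f_equal; ring. Qed.
Lemma Cis_add a b : Cis (a + b) = Cmul (Cis a) (Cis b).
Proof. unfold Cis. rewrite <- Cexp_add. unfold Cadd; simpl. f_equal. f_equal; ring. Qed.
Lemma Cis_pow t p : Cpow (Cis t) p = Cis (INR p * t).
Proof. unfold Cis. rewrite Cexp_pow. unfold Cmul, RtoC; simpl. f_equal. f_equal; ring. Qed.
Lemma Cis_inv t : Cinv (Cis t) = Cis (- t).
Proof. unfold Cis. rewrite <- Cexp_opp. unfold Copp; simpl. f_equal. f_equal; ring. Qed.
Lemma Cnorm_Cis t : Cnorm (Cis t) = 1.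
Proof.
  rewrite Cis_eq. unfold Cnorm; simpl. rewrite <- sqrt_1. f_equal.
  pose proof (sin2_cos2 t). unfold Rsqr in H. lra.
Qed.

Lemma Cis_2PI_mul (p : nat) : Cis (2 * PI * INR p) = Cone.
Proof.
  rewrite Cis_eq. unfold Cone. replace (2 * PI * INR p) with (0 + 2 * INR p * PI) by ring.
  now rewrite cos_period, sin_period, cos_0, sin_0.
Qed.

Lemma Cis_neq1_pos t : 0 < t < 2 * PI -> Cis t <> Cone.
Proof.
  intros Ht E. rewrite Cis_eq in E. injection E as Hc Hs.
  destruct (sin_eq_O_2PI_0 t) as [->|[->| ->]]; try lra.
  rewrite cos_PI in Hc. lra.
Qed.

Lemma Cis_neq1 t : - (2 * PI) < t < 2 * PI -> t <> 0 -> Cis t <> Cone.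
Proof.
  intros Ht Ht0 E. destruct (Rlt_or_le 0 t).
  - revert E. apply Cis_neq1_pos. lra.
  - apply (Cis_neq1_pos (- t)); [lra|]. rewrite <- Cis_inv, E. unfold Cinv, Cone; simpl.
    f_equal; field.
Qed.

Definition Csum_upto (f : nat -> CC) (n : nat) : CC := Csum (map f (seq 0 n)).

Lemma Csum_app l1 l2 : Csum (l1 ++ l2) = Cadd (Csum l1) (Csum l2).
Proof. induction l1 as [|a l IH]; simpl; [ring|]. rewrite IH. ring. Qed.
Lemma Cprod_app l1 l2 : Cprod (l1 ++ l2) = Cmul (Cprod l1) (Cprod l2).
Proof. induction l1 as [|a l IH]; simpl; [ring|]. rewrite IH. ring. Qed.
Lemma Csum_map_add {A} (f g : A -> CC) l :
  Csum (map (fun i => Cadd (f i) (g i)) l) = Cadd (Csum (map f l)) (Csum (map g l)).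
Proof. induction l as [|a l IH]; simpl; [ring|]. rewrite IH. ring. Qed.
Lemma Csum_map_mul_l {A} c (f : A -> CC) l :
  Csum (map (fun i => Cmul c (f i)) l) = Cmul c (Csum (map f l)).
Proof. induction l as [|a l IH]; simpl; [ring|]. rewrite IH. ring. Qed.
Lemma Csum_map_mul_r {A} c (f : A -> CC) l :
  Csum (map (fun i => Cmul (f i) c) l) = Cmul (Csum (map f l)) c.
Proof. induction l as [|a l IH]; simpl; [ring|]. rewrite IH. ring. Qed.
Lemma Csum_map_ext_in {A} (f g : A -> CC) l :
  (forall i, In i l -> f i = g i) -> Csum (map f l) = Csum (map g l).
Proof. intros H. f_equal. now apply map_ext_in. Qed.
Lemma Csum_map_zero {A} (f : A -> CC) l :
  (forall i, In i l -> f i = Czero) -> Csum (map f l) = Czero.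
Proof.
  induction l as [|a l IH]; intros H; simpl; [reflexivity|].
  rewrite (H a (in_eq a l)), IH by (intros; apply H, in_cons; auto). ring.
Qed.
Lemma Csum_map_const {A} (c : CC) (l : list A) :
  Csum (map (fun _ => c) l) = Cmul (RtoC (INR (length l))) c.
Proof.
  induction l as [|a l IH]; simpl length; [change (RtoC (INR 0)) with Czero; simpl; ring|].
  change (Cadd c (Csum (map (fun _ => c) l)) = Cmul (RtoC (INR (S (length l)))) c).
  rewrite IH, S_INR, RtoC_add. change (RtoC 1) with Cone. ring.
Qed.
Lemma Csum_map_swap {A B} (f : A -> B -> CC) l1 l2 :
  Csum (map (fun i => Csum (map (fun j => f i j) l2)) l1) =
  Csum (map (fun j => Csum (map (fun i => f i j) l1)) l2).
Proof.
  induction l1 as [|a l IH]; simpl.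
  - symmetry; now apply Csum_map_zero.
  - now rewrite IH, <- Csum_map_add.
Qed.
Lemma Cnorm_Csum_le {A} (f : A -> CC) l B : (forall i, In i l -> Cnorm (f i) <= B) ->
  Cnorm (Csum (map f l)) <= INR (length l) * B.
Proof.
  induction l as [|a l IH]; intros H; simpl length; simpl map; simpl Csum.
  - rewrite Cnorm_Czero. simpl. lra.
  - rewrite S_INR. eapply Rle_trans; [apply Cnorm_triangle|].
    pose proof (H a (or_introl eq_refl)). specialize (IH (fun i Hi => H i (or_intror Hi))). lra.
Qed.

Lemma Csum_upto_S f n : Csum_upto f (S n) = Cadd (Csum_upto f n) (f n).
Proof. unfold Csum_upto. rewrite seq_S, map_app, Csum_app. simpl. ring. Qed.
Lemma Csum_upto_S_shift f n : Csum_upto f (S n) = Cadd (f 0%nat) (Csum_upto (fun i => f (S i)) n).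
Proof. unfold Csum_upto. simpl. f_equal. now rewrite <- seq_shift, map_map. Qed.
Lemma Csum_upto_ext f g n : (forall i, (i < n)%nat -> f i = g i) -> Csum_upto f n = Csum_upto g n.
Proof. intros H. apply Csum_map_ext_in. intros i Hi. apply in_seq in Hi. apply H; lia. Qed.
Lemma Csum_upto_zero f n : (forall i, (i < n)%nat -> f i = Czero) -> Csum_upto f n = Czero.
Proof. intros H. apply Csum_map_zero. intros i Hi. apply in_seq in Hi. apply H; lia. Qed.
Lemma Csum_upto_add f g n :
  Csum_upto (fun i => Cadd (f i) (g i)) n = Cadd (Csum_upto f n) (Csum_upto g n).
Proof. apply Csum_map_add. Qed.
Lemma Csum_upto_mul_l c f n : Csum_upto (fun i => Cmul c (f i)) n = Cmul c (Csum_upto f n).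
Proof. apply Csum_map_mul_l. Qed.

Lemma Csum_single (f : nat -> CC) t a len :
  (forall b, b <> t -> f b = Czero) ->
  Csum (map f (seq a len)) = if andb (Nat.leb a t) (Nat.ltb t (a + len)) then f t else Czero.
Proof.
  intros Hf. revert a; induction len as [|len IH]; intros a; simpl.
  - destruct (Nat.leb_spec a t), (Nat.ltb_spec t (a + 0)); simpl; auto; lia.
  - rewrite IH. destruct (Nat.eq_dec a t) as [->|Hat].
    + replace (S t <=? t)%nat with false by (symmetry; apply Nat.leb_gt; lia).
      replace (t <=? t)%nat with true by (symmetry; apply Nat.leb_le; lia).
      replace (t <? t + S len)%nat with true by (symmetry; apply Nat.ltb_lt; lia). simpl. ring.
    + rewrite Hf by auto. replace (S a + len)%nat with (a + S len)%nat by lia.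
      destruct (Nat.leb_spec (S a) t), (Nat.leb_spec a t); simpl; try ring; lia.
Qed.

Lemma geometric_sum w N : Cmul (Csub w Cone) (Csum_upto (Cpow w) N) = Csub (Cpow w N) Cone.
Proof.
  induction N as [|N IH]; [simpl; unfold Csum_upto; simpl; ring|].
  rewrite Csum_upto_S. simpl Cpow. replace (Cmul (Csub w Cone) (Cadd (Csum_upto (Cpow w) N) (Cpow w N)))
    with (Cadd (Cmul (Csub w Cone) (Csum_upto (Cpow w) N)) (Cmul (Csub w Cone) (Cpow w N))) by ring.
  rewrite IH. ring.
Qed.

Lemma Cis_0 : Cis 0 = Cone.
Proof. rewrite Cis_eq, cos_0, sin_0. reflexivity. Qed.

Lemma Csum_roots_of_unity (N p m : nat) : (p < N)%nat -> (m < N)%nat ->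
  Csum_upto (fun a => Cis (INR a * (2 * PI * (INR p - INR m) / INR N))) N
  = if Nat.eqb p m then RtoC (INR N) else Czero.
Proof.
  intros Hp Hm. assert (HN : 0 < INR N) by (apply lt_0_INR; lia). pose proof PI_RGT_0.
  set (t := 2 * PI * (INR p - INR m) / INR N).
  destruct (Nat.eqb_spec p m) as [<-|Hpm].
  - replace t with 0 by (unfold t; field; lra). unfold Csum_upto.
    rewrite (Csum_map_ext_in _ (fun _ => Cone)) by (intros; now rewrite Rmult_0_r, Cis_0).
    rewrite Csum_map_const, length_seq. unfold RtoC, Cone, Cmul; simpl. f_equal; ring.
  - assert (Hpm' : INR p <> INR m) by (intro E; apply Hpm, INR_eq, E).
    assert (Hlt : INR p < INR N /\ INR m < INR N) by (split; apply lt_INR; lia).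
    assert (Hw : Csub (Cis t) Cone <> Czero).
    { intro E. apply (Cis_neq1 t).
      - pose proof (pos_INR p); pose proof (pos_INR m). unfold t.
        split; [apply Rmult_lt_reg_r with (INR N) | apply Rmult_lt_reg_r with (INR N)];
          try field_simplify; nra.
      - unfold t. intro E'. apply Hpm'. unfold Rdiv in E'.
        apply Rmult_integral in E'. destruct E' as [E'|E'].
        + apply Rmult_integral in E'. destruct E'; lra.
        + pose proof (Rinv_neq_0_compat (INR N)). lra.
      - replace (Cis t) with (Cadd (Csub (Cis t) Cone) Cone) by ring. rewrite E. ring. }
    assert (HwN : Cpow (Cis t) N = Cone).
    { rewrite Cis_pow. replace (INR N * t) with (2 * PI * INR p + - (2 * PI * INR m))
        by (unfold t; field; lra).
      rewrite Cis_add, <- Cis_inv, !Cis_2PI_mul. field.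
      intro E; injection E; lra. }
    pose proof (geometric_sum (Cis t) N) as Hgeo. rewrite HwN in Hgeo.
    rewrite (Csum_upto_ext _ (Cpow (Cis t))) by (intros; now rewrite Cis_pow).
    replace (Csum_upto (Cpow (Cis t)) N)
      with (Cmul (Cinv (Csub (Cis t) Cone)) (Cmul (Csub (Cis t) Cone) (Csum_upto (Cpow (Cis t)) N)))
      by (field; auto).
    rewrite Hgeo. ring.
Qed.

Definition circle_pt (e : R) (N a : nat) : CC := Cmul (RtoC e) (Cis (2 * PI * INR a / INR N)).

Lemma torus_pt_circle_pt eps N a j : torus_pt eps N a j = circle_pt (eps j) N (a j).
Proof. reflexivity. Qed.

Lemma Csum_circle_monomial e N p m : 0 < e -> (p < N)%nat -> (m < N)%nat ->
  Csum_upto (fun a => Cmul (Cpow (circle_pt e N a) p) (Cpow (Cinv (circle_pt e N a)) m)) N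
  = if Nat.eqb p m then RtoC (INR N) else Czero.
Proof.
  intros He Hp Hm. assert (HN : INR N <> 0) by (apply not_0_INR; lia). unfold circle_pt.
  rewrite (Csum_upto_ext _ (fun a => Cmul (RtoC (e ^ p * (/ e) ^ m))
             (Cis (INR a * (2 * PI * (INR p - INR m) / INR N))))).
  - unfold Csum_upto. rewrite Csum_map_mul_l.
    fold (Csum_upto (fun a => Cis (INR a * (2 * PI * (INR p - INR m) / INR N))) N).
    rewrite Csum_roots_of_unity by auto.
    destruct (Nat.eqb_spec p m) as [<-|]; [|ring].
    rewrite <- Rpow_mult_distr, Rinv_r, pow1, <- RtoC_mul, Rmult_1_l by lra. reflexivity.
  - intros a _. set (s := 2 * PI * INR a / INR N).
    assert (Hinv : Cinv (Cmul (RtoC e) (Cis s)) = Cmul (RtoC (/ e)) (Cis (- s))).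
    { rewrite <- Cis_inv, RtoC_inv. field. split; [apply Cexp_neq0 | apply RtoC_neq0; lra]. }
    rewrite Hinv, !Cpow_mul, !Cis_pow, RtoC_mul, !RtoC_pow.
    replace (INR a * (2 * PI * (INR p - INR m) / INR N)) with (INR p * s + INR m * - s)
      by (unfold s; field; auto).
    rewrite Cis_add. ring.
Qed.

(** * The constant term of [(P / x_1 ... x_d)^m] *)

Fixpoint binom (n k : nat) : nat :=
  match n, k with
  | _, O => 1%nat
  | O, S _ => 0%nat
  | S n', S k' => (binom n' k' + binom n' k)%nat
  end.

Lemma binom_n_0 n : binom n 0 = 1%nat.
Proof. now destruct n. Qed.

Lemma binom_gt n k : (n < k)%nat -> binom n k = 0%nat.
Proof. revert k; induction n; intros [|k] H; simpl; try lia; auto. rewrite !IHn; lia. Qed.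

Lemma C_n_0 n : C n 0 = 1.
Proof.
  unfold C. rewrite Nat.sub_0_r. pose proof (INR_fact_neq_0 n).
  change (INR (fact 0)) with 1. field. auto.
Qed.
Lemma C_n_n n : C n n = 1.
Proof.
  unfold C. rewrite Nat.sub_diag. pose proof (INR_fact_neq_0 n).
  change (INR (fact 0)) with 1. field. auto.
Qed.

Lemma binom_C n k : (k <= n)%nat -> INR (binom n k) = C n k.
Proof.
  revert k; induction n as [|n IH]; intros [|k] Hk.
  - now rewrite C_n_0.
  - lia.
  - now rewrite C_n_0.
  - simpl binom. rewrite plus_INR. destruct (Nat.eq_dec k n) as [->|Hkn].
    + rewrite (binom_gt n (S n)), IH, !C_n_n by lia. simpl. ring.
    + rewrite !IH by lia. apply pascal. lia.
Qed.

Lemma binomial_CC_gen A y r M : (r < M)%nat ->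
  Cpow (Cadd A y) r =
  Csum_upto (fun b => Cmul (RtoC (INR (binom r b))) (Cmul (Cpow y b) (Cpow A (r - b)))) M.
Proof.
  revert M; induction r as [|r IH]; intros [|M] HM; try lia.
  - rewrite Csum_upto_S_shift, Csum_upto_zero.
    + simpl. change (RtoC 1) with Cone. ring.
    + intros b _. change (RtoC (INR (binom 0 (S b)))) with Czero. ring.
  - assert (HA : Cmul A (Cpow (Cadd A y) r) = Cadd (Cpow A (S r))
        (Csum_upto (fun b => Cmul (RtoC (INR (binom r (S b)))) (Cmul (Cpow y (S b)) (Cpow A (r - b)))) M)).
    { rewrite (IH (S M)), Csum_upto_S_shift by lia.
      rewrite (Csum_upto_ext
        (fun b => Cmul (RtoC (INR (binom r (S b)))) (Cmul (Cpow y (S b)) (Cpow A (r - b))))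
        (fun b => Cmul A (Cmul (RtoC (INR (binom r (S b)))) (Cmul (Cpow y (S b)) (Cpow A (r - S b)))))).
      - rewrite Csum_upto_mul_l. rewrite binom_n_0. change (RtoC (INR 1)) with Cone.
        rewrite Nat.sub_0_r. simpl Cpow. ring.
      - intros b _. destruct (Nat.le_gt_cases (S b) r).
        + replace (r - b)%nat with (S (r - S b)) by lia. cbn [Cpow]. ring.
        + rewrite binom_gt by lia. change (RtoC (INR 0)) with Czero. ring. }
    rewrite Csum_upto_S_shift. simpl binom. rewrite Nat.sub_0_r.
    rewrite (Csum_upto_ext _ (fun b => Cadd
        (Cmul (RtoC (INR (binom r (S b)))) (Cmul (Cpow y (S b)) (Cpow A (r - b))))
        (Cmul y (Cmul (RtoC (INR (binom r b))) (Cmul (Cpow y b) (Cpow A (r - b))))))).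
    2:{ intros b _. rewrite plus_INR, RtoC_add. cbn [Cpow Nat.sub]. ring. }
    rewrite Csum_upto_add, Csum_upto_mul_l, <- IH by lia.
    change (Cpow (Cadd A y) (S r)) with (Cmul (Cadd A y) (Cpow (Cadd A y) r)).
    change (RtoC (INR 1)) with Cone. simpl Cpow.
    replace (Cmul (Cadd A y) (Cpow (Cadd A y) r))
      with (Cadd (Cmul A (Cpow (Cadd A y) r)) (Cmul y (Cpow (Cadd A y) r))) by ring.
    rewrite HA. simpl Cpow. ring.
Qed.

Lemma binomial_CC A y r : Cpow (Cadd A y) r =
  Csum_upto (fun b => Cmul (RtoC (INR (binom r b))) (Cmul (Cpow y b) (Cpow A (r - b)))) (S r).
Proof. apply binomial_CC_gen. lia. Qed.

Lemma gridsum_ext d N F G : (forall a, F a = G a) -> gridsum d N F = gridsum d N G.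
Proof.
  revert F G; induction d as [|d IH]; intros F G H; simpl; [apply H|].
  f_equal. apply map_ext. intro a. apply IH. intros; apply H.
Qed.
Lemma gridsum_add d N F G :
  gridsum d N (fun a => Cadd (F a) (G a)) = Cadd (gridsum d N F) (gridsum d N G).
Proof.
  revert F G; induction d as [|d IH]; intros F G; simpl; auto.
  rewrite <- Csum_map_add. f_equal. apply map_ext. intro a. apply IH.
Qed.
Lemma gridsum_mul_l d N c F : gridsum d N (fun a => Cmul c (F a)) = Cmul c (gridsum d N F).
Proof.
  revert F; induction d as [|d IH]; intros F; simpl; auto.
  rewrite <- Csum_map_mul_l. f_equal. apply map_ext. intro a. apply IH.
Qed.
Lemma gridsum_const d N c : gridsum d N (fun _ => c) = Cmul (RtoC (INR N ^ d)) c.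
Proof.
  induction d as [|d IH]; simpl.
  - change (RtoC 1) with Cone. ring.
  - rewrite IH, Csum_map_const, length_seq, RtoC_mul. ring.
Qed.
Lemma gridsum_Csum {A} d N (F : A -> (nat -> nat) -> CC) l :
  gridsum d N (fun a => Csum (map (fun i => F i a) l)) = Csum (map (fun i => gridsum d N (F i)) l).
Proof.
  induction l as [|i l IH]; simpl.
  - rewrite gridsum_const. ring.
  - now rewrite gridsum_add, IH.
Qed.
Lemma Cnorm_gridsum_le d N F B : (forall a, Cnorm (F a) <= B) ->
  Cnorm (gridsum d N F) <= INR N ^ d * B.
Proof.
  revert F; induction d as [|d IH]; intros F H; simpl; [rewrite Rmult_1_l; apply H|].
  eapply Rle_trans; [apply Cnorm_Csum_le; intros; apply IH; intros; apply H|].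
  rewrite length_seq. lra.
Qed.

Definition Psum (k : nat -> nat) (d : nat) (x : nat -> CC) : CC :=
  Csum (map (fun j => Cpow (x j) (k j)) (seq 0 d)).
Definition inv_diag_monomial (m d : nat) (x : nat -> CC) : CC :=
  Cprod (map (fun j => Cpow (Cinv (x j)) m) (seq 0 d)).
Definition diag_integrand (k : nat -> nat) (m d r : nat) (x : nat -> CC) : CC :=
  Cmul (Cpow (Cadd (Psum k d x) Cone) r) (inv_diag_monomial m d x).

Lemma Psum_S k d x : Psum k (S d) x = Cadd (Psum k d x) (Cpow (x d) (k d)).
Proof. unfold Psum. rewrite seq_S, map_app, Csum_app. simpl. ring. Qed.
Lemma inv_diag_monomial_S m d x :
  inv_diag_monomial m (S d) x = Cmul (inv_diag_monomial m d x) (Cpow (Cinv (x d)) m).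
Proof. unfold inv_diag_monomial. rewrite seq_S, map_app, Cprod_app. simpl. ring. Qed.

(** [diag_coef k m d r] is the coefficient of [x_0^m ... x_(d-1)^m] in [(1 + sum_j x_j^(k j))^r]. *)
Fixpoint diag_coef (k : nat -> nat) (m d r : nat) : R :=
  match d with
  | O => 1
  | S d' =>
    if andb (Nat.eqb (m mod k d') 0) (Nat.leb (m / k d') r)
    then INR (binom r (m / k d')) * diag_coef k m d' (r - m / k d')
    else 0
  end.

Lemma diag_integrand_ext k m d r x x' : (forall j, (j < d)%nat -> x j = x' j) ->
  diag_integrand k m d r x = diag_integrand k m d r x'.
Proof.
  intros H. unfold diag_integrand, Psum, inv_diag_monomial.
  assert (Hs : forall j, In j (seq 0 d) -> x j = x' j) by (intros j Hj; apply in_seq in Hj; apply H; lia).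
  rewrite (map_ext_in (fun j => Cpow (x j) (k j)) (fun j => Cpow (x' j) (k j))),
    (map_ext_in (fun j => Cpow (Cinv (x j)) m) (fun j => Cpow (Cinv (x' j)) m));
    [reflexivity | intros j Hj; now rewrite Hs ..].
Qed.

Lemma diag_integrand_S k m d r x : diag_integrand k m (S d) r x =
  Csum_upto (fun b => Cmul (RtoC (INR (binom r b)))
    (Cmul (Cmul (Cpow (x d) (k d * b)) (Cpow (Cinv (x d)) m)) (diag_integrand k m d (r - b) x))) (S r).
Proof.
  unfold diag_integrand at 1. rewrite Psum_S, inv_diag_monomial_S.
  replace (Cadd (Cadd (Psum k d x) (Cpow (x d) (k d))) Cone)
    with (Cadd (Cadd (Psum k d x) Cone) (Cpow (x d) (k d))) by ring.
  rewrite binomial_CC. unfold Csum_upto. rewrite <- Csum_map_mul_r.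
  apply Csum_map_ext_in. intros b _. unfold diag_integrand. rewrite Cpow_pow. ring.
Qed.

Lemma Csum_select_multiple (q m r : nat) (g : nat -> CC) : (0 < q)%nat ->
  Csum_upto (fun b => if Nat.eqb (q * b) m then g b else Czero) (S r) =
  (if andb (Nat.eqb (m mod q) 0) (Nat.leb (m / q) r) then g (m / q) else Czero)%nat.
Proof.
  intros Hq. destruct (Nat.eqb_spec (m mod q) 0) as [Hmod|Hmod]; simpl andb.
  - assert (Hm : forall b, (q * b = m)%nat <-> b = (m / q)%nat).
    { intros b. rewrite (Nat.div_mod_eq m q), Hmod, Nat.add_0_r at 1. split; [|intros ->; auto].
      intros E. apply (Nat.mul_cancel_l _ _ q); lia. }
    unfold Csum_upto. rewrite (Csum_single _ (m / q)).
    + replace (q * (m / q) =? m)%nat with true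
        by (symmetry; apply Nat.eqb_eq, Hm; reflexivity).
      simpl. destruct (Nat.leb_spec (m / q) r), (Nat.ltb_spec (m / q) (S r)); auto; lia.
    + intros b Hb. destruct (Nat.eqb_spec (q * b) m) as [E|]; [apply Hm in E; contradiction|auto].
  - apply Csum_upto_zero. intros b _. destruct (Nat.eqb_spec (q * b) m) as [E|]; [|auto].
    exfalso. apply Hmod. rewrite <- E, Nat.mul_comm. apply Nat.Div0.mod_mul.
Qed.

(** By orthogonality of the [N]-th roots of unity, the grid average of this Laurent polynomial is
    its constant term once [N] exceeds all the exponents [k j * m]. *)
Lemma gridsum_diag_integrand k m eps N d :
  (forall j, (j < d)%nat -> (0 < k j)%nat) -> (forall j, (j < d)%nat -> 0 < eps j) ->
  (forall j, (j < d)%nat -> (k j * m < N)%nat) ->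
  forall r, (r <= m)%nat ->
  gridsum d N (fun a => diag_integrand k m d r (torus_pt eps N a)) = RtoC (INR N ^ d * diag_coef k m d r).
Proof.
  induction d as [|d IH]; intros Hk He HkN r Hr.
  - unfold diag_integrand, Psum, inv_diag_monomial. simpl.
    replace (Cadd Czero Cone) with Cone by ring. rewrite Cpow_Cone, Rmult_1_l.
    change (RtoC 1) with Cone. ring.
  - assert (Hkd : (0 < k d)%nat) by (apply Hk; lia).
    assert (HkdN : (k d * m < N)%nat) by (apply HkN; lia).
    set (y := circle_pt (eps d) N).
    set (coef := fun b => Cmul (RtoC (INR (binom r b))) (RtoC (INR N ^ d * diag_coef k m d (r - b)))).
    assert (Hinner : forall a, gridsum d N (fun b => diag_integrand k m (S d) r
              (torus_pt eps N (fun j => if Nat.eqb j d then a else b j)))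
            = Csum_upto (fun b => Cmul (coef b) (Cmul (Cpow (y a) (k d * b)) (Cpow (Cinv (y a)) m))) (S r)).
    { intros a. rewrite (gridsum_ext _ _ _ (fun c => Csum_upto (fun b =>
          Cmul (Cmul (RtoC (INR (binom r b))) (Cmul (Cpow (y a) (k d * b)) (Cpow (Cinv (y a)) m)))
               (diag_integrand k m d (r - b) (torus_pt eps N c))) (S r))).
      - unfold Csum_upto. rewrite gridsum_Csum. apply Csum_map_ext_in. intros b Hb. apply in_seq in Hb.
        rewrite gridsum_mul_l, IH by (auto; lia). unfold coef. ring.
      - intros c. rewrite diag_integrand_S. apply Csum_upto_ext. intros b _.
        rewrite (diag_integrand_ext _ _ _ _ _ (torus_pt eps N c)).
        + rewrite torus_pt_circle_pt, Nat.eqb_refl. unfold y. ring.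
        + intros j Hj. unfold torus_pt. now replace (Nat.eqb j d) with false
            by (symmetry; apply Nat.eqb_neq; lia). }
    simpl gridsum. rewrite (Csum_map_ext_in _ _ _ (fun a _ => Hinner a)).
    unfold Csum_upto. rewrite Csum_map_swap.
    rewrite (Csum_map_ext_in _
      (fun b => if Nat.eqb (k d * b) m then Cmul (coef b) (RtoC (INR N)) else Czero)).
    2:{ intros b Hb. apply in_seq in Hb. rewrite Csum_map_mul_l.
        fold (Csum_upto (fun a => Cmul (Cpow (y a) (k d * b)) (Cpow (Cinv (y a)) m)) N).
        unfold y. rewrite Csum_circle_monomial by (auto; nia).
        destruct (Nat.eqb (k d * b) m); ring. }
    fold (Csum_upto (fun b => if Nat.eqb (k d * b) m then Cmul (coef b) (RtoC (INR N)) else Czero) (S r)).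
    rewrite Csum_select_multiple by auto. simpl diag_coef.
    destruct (andb _ _); [|now rewrite Rmult_0_r].
    unfold coef. rewrite <- !RtoC_mul. f_equal. simpl. ring.
Qed.

Definition all_divide (k : nat -> nat) (m d : nat) : bool :=
  forallb (fun j => Nat.eqb (m mod k j) 0) (seq 0 d).
Definition quot_sum (k : nat -> nat) (m d : nat) : nat :=
  fold_right Nat.add 0%nat (map (fun j => (m / k j)%nat) (seq 0 d)).
Definition quot_fact_prod (k : nat -> nat) (m d : nat) : R :=
  fold_right Rmult 1 (map (fun j => INR (fact (m / k j))) (seq 0 d)).

Lemma all_divide_S k m d : all_divide k m (S d) = andb (all_divide k m d) (Nat.eqb (m mod k d) 0).
Proof. unfold all_divide. rewrite seq_S, forallb_app. simpl. now rewrite Bool.andb_true_r. Qed.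
Lemma quot_sum_S k m d : quot_sum k m (S d) = (quot_sum k m d + m / k d)%nat.
Proof.
  unfold quot_sum. rewrite seq_S, map_app. generalize (map (fun j => (m / k j)%nat) (seq 0 d)).
  intros l. simpl. generalize (m / k d)%nat. induction l; intros; simpl; [|rewrite IHl]; lia.
Qed.
Lemma quot_fact_prod_S k m d : quot_fact_prod k m (S d) = quot_fact_prod k m d * INR (fact (m / k d)).
Proof.
  unfold quot_fact_prod. rewrite seq_S, map_app. generalize (map (fun j => INR (fact (m / k j))) (seq 0 d)).
  intros l. simpl. generalize (INR (fact (m / k d))). induction l as [|a l IH]; intros; simpl; [ring|].
  rewrite IH. ring.
Qed.
Lemma quot_fact_prod_pos k m d : 0 < quot_fact_prod k m d.
Proof.
  unfold quot_fact_prod. induction (seq 0 d); simpl; [lra|].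
  apply Rmult_lt_0_compat; auto. apply INR_fact_lt_0.
Qed.

Lemma diag_coef_closed k m d r : diag_coef k m d r =
  if andb (all_divide k m d) (Nat.leb (quot_sum k m d) r)
  then INR (fact r) / (quot_fact_prod k m d * INR (fact (r - quot_sum k m d)))
  else 0.
Proof.
  revert r; induction d as [|d IH]; intros r.
  - unfold quot_fact_prod, quot_sum; simpl. rewrite Nat.sub_0_r. field. apply INR_fact_neq_0.
  - simpl diag_coef. rewrite IH, all_divide_S, quot_sum_S, quot_fact_prod_S.
    set (q := (m / k d)%nat). set (s := quot_sum k m d).
    destruct (Nat.eqb (m mod k d) 0), (all_divide k m d); simpl andb;
      destruct (Nat.leb_spec q r), (Nat.leb_spec s (r - q)), (Nat.leb_spec (s + q) r);
      try lia; try ring.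
    rewrite binom_C by lia. unfold C. replace (r - q - s)%nat with (r - (s + q))%nat by lia.
    pose proof (quot_fact_prod_pos k m d).
    pose proof (INR_fact_lt_0 q). pose proof (INR_fact_lt_0 (r - q)).
    pose proof (INR_fact_lt_0 (r - (s + q))).
    field. repeat split; lra.
Qed.

Lemma lcmk_divide n k i : (i < n)%nat -> Nat.divide (k i) (lcmk n k).
Proof.
  unfold lcmk. intros Hi. assert (Hin : In i (seq 0 n)) by (apply in_seq; lia). revert Hin.
  generalize (seq 0 n). induction l as [|j l IH]; simpl; [tauto|]. intros [->|H].
  - apply Nat.divide_lcm_l.
  - eapply Nat.divide_trans; [apply IH, H | apply Nat.divide_lcm_r].
Qed.
Lemma lcmk_least n k m : (forall i, (i < n)%nat -> Nat.divide (k i) m) -> Nat.divide (lcmk n k) m.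
Proof.
  unfold lcmk. intros H. assert (Hl : forall i, In i (seq 0 n) -> Nat.divide (k i) m)
    by (intros i Hi; apply in_seq in Hi; apply H; lia).
  revert Hl. generalize (seq 0 n). induction l as [|j l IH]; simpl; intros Hl.
  - apply Nat.divide_1_l.
  - apply Nat.lcm_least; auto.
Qed.
Lemma lcmk_pos n k : (forall i, (i < n)%nat -> (0 < k i)%nat) -> (0 < lcmk n k)%nat.
Proof.
  unfold lcmk. intros H. assert (Hl : forall i, In i (seq 0 n) -> (0 < k i)%nat)
    by (intros i Hi; apply in_seq in Hi; apply H; lia).
  revert Hl. generalize (seq 0 n). induction l as [|j l IH]; simpl; intros Hl; [lia|].
  assert (0 < k j)%nat by auto. assert (0 < fold_right Nat.lcm 1%nat (map k l))%nat by auto.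
  destruct (Nat.eq_dec (Nat.lcm (k j) (fold_right Nat.lcm 1%nat (map k l))) 0) as [E|]; [|lia].
  apply Nat.lcm_eq_0 in E. lia.
Qed.

Lemma fold_right_Rplus_snoc l a : fold_right Rplus 0 (l ++ [a]) = fold_right Rplus 0 l + a.
Proof. induction l as [|b l IH]; simpl; [|rewrite IH]; ring. Qed.

Lemma INR_quot_sum k m d : (forall j, (j < d)%nat -> (0 < k j)%nat /\ Nat.divide (k j) m) ->
  INR (quot_sum k m d) = INR m * fold_right Rplus 0 (map (fun j => / INR (k j)) (seq 0 d)).
Proof.
  induction d as [|d IH]; intros H; [simpl; ring|].
  rewrite quot_sum_S, plus_INR, IH by (intros; apply H; lia).
  rewrite seq_S, map_app. simpl map. rewrite fold_right_Rplus_snoc.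
  destruct (H d ltac:(lia)) as [Hk [c ->]].
  rewrite Nat.div_mul, mult_INR by lia. field. apply not_0_INR; lia.
Qed.

Section Weights.
Variables (n : nat) (k : nat -> nat).
Hypothesis Hn : (2 <= n)%nat.
Hypothesis Hk : forall i, (i < n)%nat -> (0 < k i)%nat.
Hypothesis Hsum : fold_right Rplus 0 (map (fun i => / INR (k i)) (seq 0 n)) = 1.

(** Since [sum_i 1/k_i = 1], divisibility of [m] by [k_0, ..., k_(n-2)] forces
    [m = k_(n-1) (m - sum_(j < n-1) m/k_j)]. *)
Lemma last_weight_complement m : all_divide k m (n - 1) = true ->
  (quot_sum k m (n - 1) <= m /\ k (n - 1) * (m - quot_sum k m (n - 1)) = m)%nat.
Proof.
  intros Ha. set (d := (n - 1)%nat). assert (Hnd : n = S d) by (unfold d; lia).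
  assert (Hdiv : forall j, (j < d)%nat -> (0 < k j)%nat /\ Nat.divide (k j) m).
  { intros j Hj. unfold all_divide in Ha. rewrite forallb_forall in Ha.
    specialize (Ha j ltac:(apply in_seq; lia)). apply Nat.eqb_eq, Nat.Lcm0.mod_divide in Ha.
    split; auto. apply Hk. lia. }
  pose proof (INR_quot_sum k m d Hdiv) as Hs.
  rewrite Hnd, seq_S, map_app in Hsum. simpl map in Hsum. rewrite fold_right_Rplus_snoc in Hsum.
  assert (Hkd : 0 < INR (k d)) by (apply lt_0_INR, Hk; lia).
  assert (Hsm : INR m - INR (quot_sum k m d) = INR m / INR (k d)).
  { rewrite Hs. replace (fold_right Rplus 0 (map (fun j => / INR (k j)) (seq 0 d))) with (1 - / INR (k d))
      by (simpl in Hsum; lra). field. lra. }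
  assert (Hle : (quot_sum k m d <= m)%nat).
  { apply INR_le. assert (0 <= INR m / INR (k d))
      by (apply Rmult_le_pos; [apply pos_INR | left; apply Rinv_0_lt_compat; lra]).
    lra. }
  split; [exact Hle|]. apply INR_eq. rewrite mult_INR, minus_INR, Hsm by auto. field. lra.
Qed.

Lemma diag_coef_cm m : diag_coef k m (n - 1) m = cm n k m.
Proof.
  rewrite diag_coef_closed. unfold cm.
  set (d := (n - 1)%nat). assert (Hnd : n = S d) by (unfold d; lia).
  change (fold_right Rmult 1 (map (fun i => INR (fact (m / k i))) (seq 0 n))) with (quot_fact_prod k m n).
  rewrite Hnd at 2. rewrite quot_fact_prod_S.
  destruct (all_divide k m d) eqn:Ha; simpl andb.
  - destruct (last_weight_complement m Ha) as [Hle Hc]. fold d in Hle, Hc.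
    assert (Hq : (m / k d)%nat = (m - quot_sum k m d)%nat)
      by (rewrite <- Hc at 1; rewrite Nat.mul_comm, Nat.div_mul;
          [reflexivity | apply Nat.neq_0_lt_0, Hk; lia]).
    assert (HKm : (m mod lcmk n k)%nat = 0%nat).
    { apply Nat.Lcm0.mod_divide, lcmk_least. intros i Hi.
      destruct (Nat.eq_dec i d) as [->|Hid]; [exists (m - quot_sum k m d)%nat; lia|].
      unfold all_divide in Ha. rewrite forallb_forall in Ha.
      specialize (Ha i ltac:(apply in_seq; lia)). now apply Nat.eqb_eq, Nat.Lcm0.mod_divide in Ha. }
    rewrite HKm, Nat.eqb_refl. replace (quot_sum k m d <=? m)%nat with true
      by (symmetry; apply Nat.leb_le; lia).
    now rewrite Hq.
  - destruct (Nat.eqb_spec (m mod lcmk n k) 0) as [E|]; auto. exfalso.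
    apply Bool.not_true_iff_false in Ha. apply Ha, forallb_forall. intros j Hj.
    apply in_seq in Hj. apply Nat.eqb_eq, Nat.Lcm0.mod_divide.
    apply Nat.Lcm0.mod_divide in E. eapply Nat.divide_trans; [|exact E]. apply lcmk_divide. lia.
Qed.

End Weights.

(** * Riemann sums on the torus *)

Lemma torus_riemann_sum_ext d eps f g N : (forall a, f (torus_pt eps N a) = g (torus_pt eps N a)) ->
  torus_riemann_sum d eps f N = torus_riemann_sum d eps g N.
Proof. intros H. unfold torus_riemann_sum. f_equal. apply gridsum_ext. auto. Qed.
Lemma torus_riemann_sum_add d eps f g N :
  torus_riemann_sum d eps (fun x => Cadd (f x) (g x)) N =
  Cadd (torus_riemann_sum d eps f N) (torus_riemann_sum d eps g N).
Proof. unfold torus_riemann_sum. rewrite gridsum_add. ring. Qed.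
Lemma torus_riemann_sum_mul_l d eps c f N :
  torus_riemann_sum d eps (fun x => Cmul c (f x)) N = Cmul c (torus_riemann_sum d eps f N).
Proof. unfold torus_riemann_sum. rewrite gridsum_mul_l. ring. Qed.
Lemma torus_riemann_sum_const d eps c N : (0 < N)%nat -> torus_riemann_sum d eps (fun _ => c) N = c.
Proof.
  intros HN. unfold torus_riemann_sum. rewrite gridsum_const, RtoC_inv.
  field. apply RtoC_neq0, pow_nonzero, not_0_INR. lia.
Qed.
Lemma torus_riemann_sum_Csum_upto d eps (F : nat -> (nat -> CC) -> CC) M N :
  torus_riemann_sum d eps (fun x => Csum_upto (fun i => F i x) M) N =
  Csum_upto (fun i => torus_riemann_sum d eps (F i) N) M.
Proof.
  unfold torus_riemann_sum, Csum_upto.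
  rewrite (gridsum_Csum d N (fun i a => F i (torus_pt eps N a))). now rewrite <- Csum_map_mul_l.
Qed.
Lemma Cnorm_torus_riemann_sum_le d eps g N B : (0 < N)%nat ->
  (forall a, Cnorm (g (torus_pt eps N a)) <= B) -> Cnorm (torus_riemann_sum d eps g N) <= B.
Proof.
  intros HN H. unfold torus_riemann_sum. rewrite Cnorm_mul, Cnorm_RtoC.
  assert (0 < INR N ^ d) by (apply pow_lt, lt_0_INR; lia).
  rewrite Rabs_right by (apply Rle_ge; left; apply Rinv_0_lt_compat; auto).
  apply Rmult_le_reg_l with (INR N ^ d); auto. rewrite <- Rmult_assoc, Rinv_r, Rmult_1_l by lra.
  now apply Cnorm_gridsum_le.
Qed.

Lemma Cnorm_torus_pt eps N a j : 0 < eps j -> Cnorm (torus_pt eps N a j) = eps j.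
Proof.
  intros He. rewrite torus_pt_circle_pt. unfold circle_pt.
  rewrite Cnorm_mul, Cnorm_RtoC, Cnorm_Cis, Rabs_right by lra. ring.
Qed.
Lemma torus_pt_neq0 eps N a j : 0 < eps j -> torus_pt eps N a j <> Czero.
Proof. intros He E. pose proof (Cnorm_torus_pt eps N a j He). rewrite E, Cnorm_Czero in H. lra. Qed.

Lemma Cprod_neq0 (x : nat -> CC) l : (forall j, In j l -> x j <> Czero) -> Cprod (map x l) <> Czero.
Proof.
  induction l as [|a l IH]; simpl; intros H.
  - intro E; injection E; lra.
  - apply Cmul_neq0; auto.
Qed.
Lemma Cinv_Cprod (x : nat -> CC) l : (forall j, In j l -> x j <> Czero) ->
  Cinv (Cprod (map x l)) = Cprod (map (fun j => Cinv (x j)) l).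
Proof.
  induction l as [|a l IH]; simpl; intros H.
  - unfold Cinv, Cone; simpl. f_equal; field.
  - rewrite <- IH by auto. field. split; [apply Cprod_neq0|]; auto.
Qed.
Lemma Cpow_Cprod (f : nat -> CC) l m : Cpow (Cprod (map f l)) m = Cprod (map (fun j => Cpow (f j) m) l).
Proof. induction l as [|a l IH]; simpl; [apply Cpow_Cone|]. now rewrite Cpow_mul, IH. Qed.

Lemma Pratio_pow n k x xi m : (forall j, (j < n - 1)%nat -> x j <> Czero) -> (0 < lcmk n k)%nat ->
  Cpow (Cmul xi (Pratio n k x)) m =
  Cmul (Cmul (Cpow xi m) (RtoC ((/ INR (lcmk n k)) ^ m))) (diag_integrand k m (n - 1) m x).
Proof.
  intros Hx HK. assert (HK' : INR (lcmk n k) <> 0) by (apply not_0_INR; lia).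
  assert (Hx' : forall j, In j (seq 0 (n - 1)) -> x j <> Czero)
    by (intros j Hj; apply in_seq in Hj; apply Hx; lia).
  unfold Pratio, Cdiv, diag_integrand, inv_diag_monomial.
  replace (Cinv (Cmul (RtoC (INR (lcmk n k))) (Cprod (map x (seq 0 (n - 1))))))
    with (Cmul (RtoC (/ INR (lcmk n k))) (Cinv (Cprod (map x (seq 0 (n - 1))))))
    by (rewrite RtoC_inv; field; split; [apply Cprod_neq0 | apply RtoC_neq0]; auto).
  rewrite Cinv_Cprod, !Cpow_mul, <- RtoC_pow, Cpow_Cprod by auto. unfold Ppoly. fold (Psum k (n - 1) x). ring.
Qed.

Definition sum_k (n : nat) (k : nat -> nat) : nat := fold_right Nat.add 0%nat (map k (seq 0 n)).

Lemma le_sum_k n k j : (j < n)%nat -> (k j <= sum_k n k)%nat.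
Proof.
  unfold sum_k. intros H. assert (Hj : In j (seq 0 n)) by (apply in_seq; lia). revert Hj.
  generalize (seq 0 n). induction l as [|i l IH]; simpl; [tauto|]. intros [->|Hj]; [lia|].
  specialize (IH Hj). lia.
Qed.

Lemma torus_riemann_sum_Pratio_pow n k eps xi m N : (2 <= n)%nat ->
  (forall i, (i < n)%nat -> (0 < k i)%nat) ->
  fold_right Rplus 0 (map (fun i => / INR (k i)) (seq 0 n)) = 1 ->
  (forall j, (j < n - 1)%nat -> 0 < eps j) ->
  (m * sum_k n k < N)%nat ->
  torus_riemann_sum (n - 1) eps (fun x => Cpow (Cmul xi (Pratio n k x)) m) N =
  Cmul (RtoC (cm n k m / INR (lcmk n k) ^ m)) (Cpow xi m).
Proof.
  intros Hn Hk Hs He HN. pose proof (lcmk_pos n k Hk) as HK.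
  assert (HN0 : INR N ^ (n - 1) <> 0).
  { apply pow_nonzero, not_0_INR.
    pose proof (le_sum_k n k 0 ltac:(lia)). pose proof (Hk 0%nat ltac:(lia)). nia. }
  rewrite (torus_riemann_sum_ext _ _ _ (fun x => Cmul (Cmul (Cpow xi m) (RtoC ((/ INR (lcmk n k)) ^ m)))
     (diag_integrand k m (n - 1) m x))).
  - unfold torus_riemann_sum. rewrite gridsum_mul_l, gridsum_diag_integrand, diag_coef_cm by
      (auto; intros j Hj; try apply Hk; try pose proof (le_sum_k n k j); nia).
    rewrite pow_inv.
    transitivity (Cmul (RtoC (/ INR N ^ (n - 1) * / INR (lcmk n k) ^ m * (INR N ^ (n - 1) * cm n k m)))
      (Cpow xi m)); [rewrite !RtoC_mul; ring|].
    do 2 f_equal. field. split; [apply pow_nonzero, not_0_INR; lia | auto].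
  - intros a. apply Pratio_pow; auto. intros j Hj. apply torus_pt_neq0; auto.
Qed.

(** * Tail of the logarithmic series *)

Lemma Rabs_sub_le_of_derivable f f' B :
  (forall c, 0 <= c <= 1 -> derivable_pt_lim f c (f' c)) -> (forall c, 0 <= c <= 1 -> Rabs (f' c) <= B) ->
  Rabs (f 1 - f 0) <= B.
Proof.
  intros Hd HB.
  destruct (MVT_abs f f' 0 1) as [c [Hc Hc01]].
  - rewrite Rmin_left, Rmax_right by lra. auto.
  - rewrite Rmin_left, Rmax_right in Hc01 by lra. rewrite Hc, Rminus_0_r, Rabs_R1, Rmult_1_r. auto.
Qed.

Definition log_path (u : CC) (t : R) : CC := Csub Cone (Cmul (RtoC t) u).

Lemma derivable_ln_Cnorm_log_path u t : 0 < fst (log_path u t) ->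
  derivable_pt_lim (fun s => ln (Cnorm (log_path u s))) t (fst (Cdiv (Copp u) (log_path u t))).
Proof.
  intros H. destruct u as [a b].
  unfold log_path, Cnorm, Cdiv, Cinv, Csub, Cadd, Copp, Cmul, RtoC, Cone in *; simpl in *.
  apply is_derive_Reals. auto_derive;
  match goal with |- context [sqrt ?Q] =>
    assert (HQ : 0 < Q) by nra; pose proof (sqrt_sqrt Q (Rlt_le _ _ HQ)) as HS;
    pose proof (sqrt_lt_R0 Q HQ); set (S := sqrt Q) in *; set (Q0 := Q) in * end.
  - auto.
  - rewrite Rmult_assoc, <- Rinv_mult. replace (2 * S * S) with (2 * Q0) by (rewrite <- HS; ring).
    unfold Q0. field. nra.
Qed.

Lemma derivable_atan_log_path u t : 0 < fst (log_path u t) ->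
  derivable_pt_lim (fun s => atan (snd (log_path u s) / fst (log_path u s))) t
    (snd (Cdiv (Copp u) (log_path u t))).
Proof.
  intros H. destruct u as [a b].
  unfold log_path, Cnorm, Cdiv, Cinv, Csub, Cadd, Copp, Cmul, RtoC, Cone in *; simpl in *.
  apply is_derive_Reals. auto_derive; [lra | field; split; nra].
Qed.

(** Partial sums of the series of [- log (1 - t u)], and their [t]-derivatives. *)
Definition log_series (u : CC) (M : nat) (t : R) : CC :=
  Csum_upto (fun i => Cmul (RtoC (t ^ S i / INR (S i))) (Cpow u (S i))) M.
Definition log_series_deriv (u : CC) (M : nat) (t : R) : CC :=
  Csum_upto (fun i => Cmul (RtoC (t ^ i)) (Cpow u (S i))) M.

Lemma derivable_log_series_proj (pr : CC -> R) :
  (forall z w, pr (Cadd z w) = pr z + pr w) -> (forall r z, pr (Cmul (RtoC r) z) = r * pr z) ->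
  forall u M t, derivable_pt_lim (fun s => pr (log_series u M s)) t (pr (log_series_deriv u M t)).
Proof.
  intros Hadd Hscal u M t.
  assert (H0 : pr Czero = 0).
  { replace Czero with (Cmul (RtoC 0) Czero) at 1 by (change (RtoC 0) with Czero; ring).
    rewrite Hscal. ring. }
  unfold log_series, log_series_deriv. induction M as [|M IH].
  - unfold Csum_upto; simpl. rewrite H0. apply derivable_pt_lim_const.
  - rewrite Csum_upto_S, Hadd, Hscal.
    apply (derivable_pt_lim_ext (fun s => pr (Csum_upto (fun i => Cmul (RtoC (s ^ S i / INR (S i)))
      (Cpow u (S i))) M) + s ^ S M / INR (S M) * pr (Cpow u (S M)))).
    + intros s. now rewrite Csum_upto_S, Hadd, Hscal.
    + apply derivable_pt_lim_plus; [exact IH|].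
      apply is_derive_Reals. auto_derive; [auto|].
      change (match M with 0%nat => 1 | S _ => INR M + 1 end) with (INR (S M)).
      change (Cmul u (Cpow u M)) with (Cpow u (S M)).
      field. apply not_0_INR. lia.
Qed.

Lemma log_path_mul_log_series_deriv u M t :
  Cmul (log_path u t) (log_series_deriv u M t) = Csub u (Cmul (RtoC (t ^ M)) (Cpow u (S M))).
Proof.
  unfold log_path, log_series_deriv. induction M as [|M IH].
  - unfold Csum_upto; simpl. change (RtoC 1) with Cone. ring.
  - rewrite Csum_upto_S. replace (Cmul (Csub Cone (Cmul (RtoC t) u)) (Cadd (Csum_upto
      (fun i => Cmul (RtoC (t ^ i)) (Cpow u (S i))) M) (Cmul (RtoC (t ^ M)) (Cpow u (S M)))))
      with (Cadd (Cmul (Csub Cone (Cmul (RtoC t) u)) (Csum_upto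
      (fun i => Cmul (RtoC (t ^ i)) (Cpow u (S i))) M))
      (Cmul (Csub Cone (Cmul (RtoC t) u)) (Cmul (RtoC (t ^ M)) (Cpow u (S M))))) by ring.
    rewrite IH. simpl pow. rewrite RtoC_mul. simpl Cpow. ring.
Qed.

Lemma derivable_fst_log_series u M t :
  derivable_pt_lim (fun s => fst (log_series u M s)) t (fst (log_series_deriv u M t)).
Proof. apply derivable_log_series_proj; intros; [reflexivity | destruct z; simpl; ring]. Qed.
Lemma derivable_snd_log_series u M t :
  derivable_pt_lim (fun s => snd (log_series u M s)) t (snd (log_series_deriv u M t)).
Proof. apply derivable_log_series_proj; intros; [reflexivity | destruct z; simpl; ring]. Qed.

Lemma log_series_0 u M : log_series u M 0 = Czero.
Proof.
  apply Csum_upto_zero. intros i _. rewrite pow_ne_zero by lia. unfold Rdiv.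
  rewrite Rmult_0_l. change (RtoC 0) with Czero. ring.
Qed.

Lemma log_path_fst_ge u q c : Cnorm u <= q -> 0 <= c <= 1 -> 1 - q <= fst (log_path u c).
Proof.
  intros Hu Hc. pose proof (Rabs_fst_le_Cnorm u). pose proof (Rle_abs (fst u)). pose proof (Rabs_pos (fst u)).
  replace (fst (log_path u c)) with (1 - c * fst u) by (unfold log_path; destruct u; simpl; ring). nra.
Qed.

Lemma Cnorm_log_series_remainder_deriv u q M c : Cnorm u <= q -> q < 1 -> 0 <= c <= 1 ->
  Cnorm (Cadd (Cdiv (Copp u) (log_path u c)) (log_series_deriv u M c)) <= q ^ S M / (1 - q).
Proof.
  intros Hu Hq Hc. pose proof (log_path_fst_ge u q c Hu Hc) as Hre.
  assert (Hq0 : 0 <= q) by (pose proof (Cnorm_nonneg u); lra).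
  assert (Hw : log_path u c <> Czero) by (intro E; rewrite E in Hre; simpl in Hre; lra).
  assert (Hwn : 1 - q <= Cnorm (log_path u c))
    by (eapply Rle_trans; [exact Hre | eapply Rle_trans; [apply Rle_abs | apply Rabs_fst_le_Cnorm]]).
  (* the geometric sum cancels [-u / (1 - c u)] up to the single term [- c^M u^(M+1) / (1 - c u)] *)
  assert (Hmul : Cmul (log_path u c) (Cadd (Cdiv (Copp u) (log_path u c)) (log_series_deriv u M c))
                 = Copp (Cmul (RtoC (c ^ M)) (Cpow u (S M)))).
  { replace (Cmul (log_path u c) (Cadd (Cdiv (Copp u) (log_path u c)) (log_series_deriv u M c)))
      with (Cadd (Copp u) (Cmul (log_path u c) (log_series_deriv u M c))) by (field; auto).
    rewrite log_path_mul_log_series_deriv. ring. }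
  apply Rmult_le_reg_l with (1 - q); [lra|].
  replace ((1 - q) * (q ^ S M / (1 - q))) with (q ^ S M) by (field; lra).
  eapply Rle_trans; [apply Rmult_le_compat_r; [apply Cnorm_nonneg | exact Hwn]|].
  rewrite <- Cnorm_mul, Hmul, Cnorm_opp, Cnorm_mul, Cnorm_RtoC, Cnorm_pow, <- RPow_abs, Rabs_right by lra.
  rewrite <- (Rmult_1_l (q ^ S M)). apply Rmult_le_compat.
  - apply pow_le. lra.
  - apply pow_le, Cnorm_nonneg.
  - rewrite <- (pow1 M). apply pow_incr. lra.
  - apply pow_incr. split; [apply Cnorm_nonneg | exact Hu].
Qed.

(** Mean value theorem for the real and imaginary parts of [t |-> log (1 - t u) + log_series u M t]
    on [[0, 1]]; the imaginary part is [atan] of a quotient because [Re (1 - t u) > 0]. *)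
Lemma Cnorm_CLog_log_series_le u q M : Cnorm u <= q -> q < 1 ->
  Cnorm (Cadd (CLog (Csub Cone u)) (log_series u M 1)) <= 2 * (q ^ S M / (1 - q)).
Proof.
  intros Hu Hq.
  assert (Hre : forall c, 0 <= c <= 1 -> 0 < fst (log_path u c))
    by (intros c Hc; pose proof (log_path_fst_ge u q c Hu Hc); pose proof (Cnorm_nonneg u); lra).
  pose proof (Cnorm_log_series_remainder_deriv u q M) as HD.
  assert (H0 : log_path u 0 = Cone) by (unfold log_path; change (RtoC 0) with Czero; ring).
  assert (H1 : log_path u 1 = Csub Cone u) by (unfold log_path; change (RtoC 1) with Cone; ring).
  assert (Hfst : Rabs (fst (Cadd (CLog (Csub Cone u)) (log_series u M 1))) <= q ^ S M / (1 - q)).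
  { replace (fst (Cadd (CLog (Csub Cone u)) (log_series u M 1)))
      with ((ln (Cnorm (log_path u 1)) + fst (log_series u M 1))
            - (ln (Cnorm (log_path u 0)) + fst (log_series u M 0)))
      by (rewrite H0, H1, log_series_0, Cnorm_Cone, ln_1; simpl; ring).
    apply (Rabs_sub_le_of_derivable (fun t => ln (Cnorm (log_path u t)) + fst (log_series u M t))
      (fun c => fst (Cadd (Cdiv (Copp u) (log_path u c)) (log_series_deriv u M c)))).
    - intros c Hc. apply derivable_pt_lim_plus; [apply derivable_ln_Cnorm_log_path; auto |].
      apply derivable_fst_log_series.
    - intros c Hc. eapply Rle_trans; [apply Rabs_fst_le_Cnorm | auto]. }
  assert (Hsnd : Rabs (snd (Cadd (CLog (Csub Cone u)) (log_series u M 1))) <= q ^ S M / (1 - q)).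
  { pose proof (Hre 1 ltac:(lra)) as Hre1. rewrite H1 in Hre1.
    replace (snd (Cadd (CLog (Csub Cone u)) (log_series u M 1)))
      with ((atan (snd (log_path u 1) / fst (log_path u 1)) + snd (log_series u M 1))
            - (atan (snd (log_path u 0) / fst (log_path u 0)) + snd (log_series u M 0))).
    2:{ rewrite H0, H1, log_series_0. unfold CLog, Arg. simpl snd at 1.
        destruct (Rlt_dec 0 (fst (Csub Cone u))); [|lra].
        change (snd Cone / fst Cone) with (0 / 1). unfold Rdiv at 2. rewrite Rmult_0_l, atan_0.
        simpl. ring. }
    apply (Rabs_sub_le_of_derivable
      (fun t => atan (snd (log_path u t) / fst (log_path u t)) + snd (log_series u M t))
      (fun c => snd (Cadd (Cdiv (Copp u) (log_path u c)) (log_series_deriv u M c)))).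
    - intros c Hc. apply derivable_pt_lim_plus; [apply derivable_atan_log_path; auto |].
      apply derivable_snd_log_series.
    - intros c Hc. eapply Rle_trans; [apply Rabs_snd_le_Cnorm | auto]. }
  eapply Rle_trans; [apply Cnorm_le_Rabs_fst_snd | lra].
Qed.

Lemma Cnorm_Csum_geometric_tail (a : nat -> CC) q : 0 <= q < 1 ->
  (forall m, (1 <= m)%nat -> Cnorm (a m) <= q ^ m) ->
  forall len s, (1 <= s)%nat -> Cnorm (Csum (map a (seq s len))) <= q ^ s / (1 - q).
Proof.
  intros Hq Ha. induction len as [|len IH]; intros s Hs; simpl.
  - rewrite Cnorm_Czero. apply Rmult_le_pos; [apply pow_le; lra | left; apply Rinv_0_lt_compat; lra].
  - eapply Rle_trans; [apply Cnorm_triangle|]. pose proof (IH (S s) ltac:(lia)). pose proof (Ha s Hs).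
    simpl in H. apply Rle_trans with (q ^ s + q * q ^ s / (1 - q)); [lra | right; field; lra].
Qed.

Lemma Ccv_of_Cauchy (P : nat -> CC) :
  (forall e, 0 < e -> exists N0, forall n1 n2, (N0 <= n1)%nat -> (N0 <= n2)%nat ->
     Cnorm (Csub (P n1) (P n2)) < e) ->
  exists l, Ccv P l.
Proof.
  intros HC.
  assert (Hfst : Cauchy_crit (fun N => fst (P N))).
  { intros e He. destruct (HC e He) as [N0 HN0]. exists N0. intros n1 n2 H1 H2. unfold Rdist.
    eapply Rle_lt_trans; [|apply (HN0 n1 n2 H1 H2)]. eapply Rle_trans; [|apply Rabs_fst_le_Cnorm].
    right. destruct (P n1), (P n2). reflexivity. }
  assert (Hsnd : Cauchy_crit (fun N => snd (P N))).
  { intros e He. destruct (HC e He) as [N0 HN0]. exists N0. intros n1 n2 H1 H2. unfold Rdist.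
    eapply Rle_lt_trans; [|apply (HN0 n1 n2 H1 H2)]. eapply Rle_trans; [|apply Rabs_snd_le_Cnorm].
    right. destruct (P n1), (P n2). reflexivity. }
  destruct (Rcomplete.R_complete _ Hfst) as [lR HR], (Rcomplete.R_complete _ Hsnd) as [lI HI].
  exists (lR, lI). intros e He.
  destruct (HR (e / 2) ltac:(lra)) as [N1 HN1], (HI (e / 2) ltac:(lra)) as [N2 HN2].
  exists (max N1 N2). intros N HN.
  eapply Rle_lt_trans; [apply Cnorm_le_Rabs_fst_snd|].
  specialize (HN1 N ltac:(lia)). specialize (HN2 N ltac:(lia)). unfold Rdist in *.
  destruct (P N). simpl in *. unfold Rminus in *. lra.
Qed.

Lemma Cseries1_geometric_bound (a : nat -> CC) q : 0 <= q < 1 ->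
  (forall m, (1 <= m)%nat -> Cnorm (a m) <= q ^ m) -> exists S, Cseries1 a S.
Proof.
  intros Hq Ha. apply Ccv_of_Cauchy. intros e He.
  destruct (pow_lt_1_zero q ltac:(rewrite Rabs_right; lra) (e * (1 - q)) ltac:(apply Rmult_lt_0_compat; lra))
    as [N0 HN0].
  exists N0.
  assert (Hmono : forall x y, (N0 <= x)%nat -> (x <= y)%nat ->
            Cnorm (Csub (Csum (map a (seq 1 y))) (Csum (map a (seq 1 x)))) < e).
  { intros x y Hx Hy. replace y with (x + (y - x))%nat at 1 by lia.
    rewrite seq_app, map_app, Csum_app.
    replace (Csub (Cadd (Csum (map a (seq 1 x))) (Csum (map a (seq (1 + x) (y - x)))))
                  (Csum (map a (seq 1 x))))
      with (Csum (map a (seq (1 + x) (y - x)))) by ring.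
    eapply Rle_lt_trans; [apply (Cnorm_Csum_geometric_tail a q Hq Ha); lia|].
    specialize (HN0 (S x) ltac:(lia)). rewrite Rabs_right in HN0 by (apply Rle_ge, pow_le; lra).
    apply Rmult_lt_reg_r with (1 - q); [lra|].
    unfold Rdiv. rewrite Rmult_assoc, Rinv_l, Rmult_1_r by lra. auto. }
  intros n1 n2 H1 H2. destruct (Nat.le_ge_cases n1 n2).
  - rewrite Cnorm_sub_comm. auto.
  - auto.
Qed.

Lemma Cseries1_ext (a b : nat -> CC) S : (forall m, (1 <= m)%nat -> a m = b m) ->
  Cseries1 a S -> Cseries1 b S.
Proof.
  intros H HS e He. destruct (HS e He) as [N0 HN0]. exists N0. intros N HN.
  rewrite <- (Csum_map_ext_in a b); auto. intros m Hm. apply in_seq in Hm. apply H; lia.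
Qed.

Lemma Csum_seq1_mul_block (a : nat -> CC) q J :
  (0 < q)%nat -> (forall m, (m mod q <> 0)%nat -> a m = Czero) ->
  Csum (map a (seq 1 (q * J))) = Csum (map (fun j => a (q * j)%nat) (seq 1 J)).
Proof.
  intros Hq Ha. induction J as [|J IH]; [now rewrite Nat.mul_0_r|].
  replace (q * S J)%nat with (q * J + (q - 1) + 1)%nat by lia.
  rewrite !seq_app, !map_app, !Csum_app, IH, (seq_S J 1), map_app, Csum_app.
  rewrite (Csum_map_zero a (seq (1 + q * J) (q - 1))).
  - simpl. replace (S (q * J + (q - 1)))%nat with (q * S J)%nat by lia. ring.
  - intros m Hm. apply in_seq in Hm. apply Ha. intro E.
    replace m with (q * J + (m - q * J))%nat in E by lia.
    rewrite Nat.mul_comm, Nat.add_comm, Nat.Div0.mod_add, Nat.mod_small in E; lia.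
Qed.

Lemma Cseries1_mul_block (a : nat -> CC) q S : (0 < q)%nat ->
  (forall m, (m mod q <> 0)%nat -> a m = Czero) ->
  Cseries1 a S -> Cseries1 (fun j => a (q * j)%nat) S.
Proof.
  intros Hq Ha HS e He. destruct (HS e He) as [N0 HN0]. exists N0. intros J HJ.
  rewrite <- Csum_seq1_mul_block by auto. apply HN0. nia.
Qed.

(** * The contour integral of [log (1 - xi P / (k x_1 ... x_(n-1)))] *)

Definition log_coef (n : nat) (k : nat -> nat) (xi : CC) (m : nat) : CC :=
  Cdiv (Cmul (RtoC (cm n k m)) (Cpow xi m)) (RtoC (INR m * INR (lcmk n k) ^ m)).

Section LogIntegral.
Variables (n : nat) (k : nat -> nat) (eps : nat -> R) (xi : CC) (s : R).
Hypothesis Hn : (2 <= n)%nat.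
Hypothesis Hk : forall i, (i < n)%nat -> (0 < k i)%nat.
Hypothesis Hsum : fold_right Rplus 0 (map (fun i => / INR (k i)) (seq 0 n)) = 1.
Hypothesis Heps : forall j, (j < n - 1)%nat -> 0 < eps j.
Hypothesis Hlub : is_lub (fun r => exists x : nat -> CC,
                  (forall j, (j < n - 1)%nat -> Cnorm (x j) = eps j) /\ r = Cnorm (Pratio n k x)) s.
Hypothesis Hs : Cnorm xi * s < 1.

Lemma Cnorm_ratio_torus_pt_le N a : Cnorm (Cmul xi (Pratio n k (torus_pt eps N a))) <= Cnorm xi * s.
Proof.
  rewrite Cnorm_mul. apply Rmult_le_compat_l; [apply Cnorm_nonneg|].
  apply (proj1 Hlub). exists (torus_pt eps N a). split; auto.
  intros; apply Cnorm_torus_pt; auto.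
Qed.

Lemma Cnorm_xi_mul_sup_bounds : 0 <= Cnorm xi * s < 1.
Proof.
  split; [|exact Hs]. apply Rmult_le_pos; [apply Cnorm_nonneg|].
  eapply Rle_trans; [apply Cnorm_nonneg|]. apply (proj1 Hlub).
  exists (torus_pt eps 1 (fun _ => 0%nat)). split; auto. intros; apply Cnorm_torus_pt; auto.
Qed.

Lemma log_coef_torus_riemann_sum m N : (1 <= m)%nat -> (m * sum_k n k < N)%nat ->
  log_coef n k xi m = Cmul (RtoC (/ INR m))
    (torus_riemann_sum (n - 1) eps (fun x => Cpow (Cmul xi (Pratio n k x)) m) N).
Proof.
  intros Hm HN. rewrite torus_riemann_sum_Pratio_pow by auto. unfold log_coef.
  pose proof (lcmk_pos n k Hk).
  assert (INR m <> 0) by (apply not_0_INR; lia).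
  assert (INR (lcmk n k) ^ m <> 0) by (apply pow_nonzero, not_0_INR; lia).
  rewrite Cdiv_RtoC. transitivity (Cmul (RtoC (cm n k m * / (INR m * INR (lcmk n k) ^ m))) (Cpow xi m));
    [rewrite RtoC_mul; ring|].
  transitivity (Cmul (RtoC (/ INR m * (cm n k m / INR (lcmk n k) ^ m))) (Cpow xi m));
    [do 2 f_equal; field; auto | rewrite RtoC_mul; ring].
Qed.

Lemma Cnorm_log_coef_le m : (1 <= m)%nat -> Cnorm (log_coef n k xi m) <= (Cnorm xi * s) ^ m.
Proof.
  intros Hm. rewrite (log_coef_torus_riemann_sum m (S (m * sum_k n k))) by lia.
  pose proof Cnorm_xi_mul_sup_bounds. assert (1 <= INR m) by (apply (le_INR 1); lia).
  rewrite Cnorm_mul, Cnorm_RtoC, Rabs_right by (apply Rle_ge; left; apply Rinv_0_lt_compat; lra).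
  rewrite <- (Rmult_1_l ((Cnorm xi * s) ^ m)). apply Rmult_le_compat.
  - left; apply Rinv_0_lt_compat; lra.
  - apply Cnorm_nonneg.
  - rewrite <- Rinv_1. apply Rinv_le_contravar; lra.
  - apply Cnorm_torus_riemann_sum_le; [lia|]. intros a. rewrite Cnorm_pow.
    apply pow_incr. split; [apply Cnorm_nonneg | apply Cnorm_ratio_torus_pt_le].
Qed.

Lemma log_coef_summable : exists S, Cseries1 (log_coef n k xi) S.
Proof. exact (Cseries1_geometric_bound _ _ Cnorm_xi_mul_sup_bounds Cnorm_log_coef_le). Qed.

Lemma torus_riemann_sum_log_series M N : (M * sum_k n k < N)%nat ->
  torus_riemann_sum (n - 1) eps (fun x => log_series (Cmul xi (Pratio n k x)) M 1) N =
  Csum (map (log_coef n k xi) (seq 1 M)).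
Proof.
  intros HN. unfold log_series. rewrite torus_riemann_sum_Csum_upto. unfold Csum_upto.
  rewrite <- seq_shift, map_map. apply Csum_map_ext_in. intros i Hi. apply in_seq in Hi.
  rewrite (log_coef_torus_riemann_sum (S i) N) by nia.
  rewrite <- torus_riemann_sum_mul_l. apply torus_riemann_sum_ext. intros a.
  now rewrite pow1, Rdiv_1_l.
Qed.

Lemma torus_integral_CLog L Sigma : Cseries1 (log_coef n k xi) Sigma ->
  torus_integral_is (n - 1) eps (fun x => Cadd L (CLog (Csub Cone (Cmul xi (Pratio n k x)))))
    (Cadd L (Copp Sigma)).
Proof.
  intros HS e He. set (q := Cnorm xi * s). pose proof Cnorm_xi_mul_sup_bounds as Hq. fold q in Hq.
  destruct (HS (e / 2) ltac:(lra)) as [M1 HM1].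
  destruct (pow_lt_1_zero q ltac:(rewrite Rabs_right; lra) (e * (1 - q) / 4)) as [M2 HM2];
    [apply Rmult_lt_0_compat; [apply Rmult_lt_0_compat|]; lra|].
  set (M := max M1 M2). exists (S (M * sum_k n k)). intros N HN.
  set (T := fun x => Cadd (CLog (Csub Cone (Cmul xi (Pratio n k x))))
                          (log_series (Cmul xi (Pratio n k x)) M 1)).
  rewrite (torus_riemann_sum_ext _ _ _ (fun x => Cadd L (Cadd (T x)
             (Cmul (Copp Cone) (log_series (Cmul xi (Pratio n k x)) M 1))))) by (intros; unfold T; ring).
  rewrite !torus_riemann_sum_add, torus_riemann_sum_const, torus_riemann_sum_mul_l,
    torus_riemann_sum_log_series by lia.
  specialize (HM1 M ltac:(lia)). specialize (HM2 (S M) ltac:(lia)).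
  set (R := torus_riemann_sum (n - 1) eps T N). set (P := Csum (map (log_coef n k xi) (seq 1 M))).
  replace (Csub (Cadd L (Cadd R (Cmul (Copp Cone) P))) (Cadd L (Copp Sigma)))
    with (Cadd R (Copp (Csub P Sigma)))
    by ring.
  eapply Rle_lt_trans; [apply Cnorm_triangle|]. rewrite Cnorm_opp. fold P in HM1.
  assert (HR : Cnorm R <= 2 * (q ^ S M / (1 - q))).
  { apply Cnorm_torus_riemann_sum_le; [lia|]. intros a. apply Cnorm_CLog_log_series_le; [|lra].
    apply Cnorm_ratio_torus_pt_le. }
  rewrite Rabs_right in HM2 by (apply Rle_ge, pow_le; lra).
  assert (2 * (q ^ S M / (1 - q)) < e / 2).
  { apply Rmult_lt_reg_r with (1 - q); [lra|].
    replace (2 * (q ^ S M / (1 - q)) * (1 - q)) with (2 * q ^ S M) by (field; lra). lra. }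
  lra.
Qed.

End LogIntegral.

Lemma cm_lcmk_mul n k j : (forall i, (i < n)%nat -> (0 < k i)%nat) -> cm n k (lcmk n k * j) = dm n k j.
Proof.
  intros Hk. pose proof (lcmk_pos n k Hk) as HK. unfold cm, dm, wt.
  rewrite Nat.mul_comm, Nat.Div0.mod_mul, Nat.eqb_refl, (Nat.mul_comm j). do 2 f_equal.
  apply map_ext_in. intros i Hi. apply in_seq in Hi.
  destruct (lcmk_divide n k i ltac:(lia)) as [c Hc]. rewrite Hc.
  replace (c * k i * j)%nat with (c * j * k i)%nat by ring.
  rewrite !Nat.div_mul; [reflexivity | pose proof (Hk i ltac:(lia)); lia ..].
Qed.

Lemma log_coef_not_multiple n k xi m : (m mod lcmk n k <> 0)%nat -> log_coef n k xi m = Czero.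
Proof.
  intros Hm. unfold log_coef, cm. apply Nat.eqb_neq in Hm. rewrite Hm.
  change (RtoC 0) with Czero. unfold Cdiv. ring.
Qed.

Lemma dm_term_log_coef n k xi j : (forall i, (i < n)%nat -> (0 < k i)%nat) -> (1 <= j)%nat ->
  Cdiv (Cmul (RtoC (dm n k j)) (Cpow (Cdiv (Cpow xi (lcmk n k)) (RtoC (INR (lcmk n k) ^ lcmk n k))) j))
       (RtoC (INR j))
  = Cmul (RtoC (INR (lcmk n k))) (log_coef n k xi (lcmk n k * j)).
Proof.
  intros Hk Hj. pose proof (lcmk_pos n k Hk) as HK. unfold log_coef.
  rewrite cm_lcmk_mul by auto. set (K := lcmk n k).
  assert (HK' : INR K <> 0) by (apply not_0_INR; unfold K; lia).
  assert (Hj' : INR j <> 0) by (apply not_0_INR; lia).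
  rewrite !Cdiv_RtoC, Cpow_mul, Cpow_pow, <- RtoC_pow.
  transitivity (Cmul (RtoC (dm n k j * (/ (INR K ^ K)) ^ j * / INR j)) (Cpow xi (K * j)));
    [rewrite !RtoC_mul; ring|].
  transitivity (Cmul (RtoC (INR K * (dm n k j * / (INR (K * j) * INR K ^ (K * j))))) (Cpow xi (K * j)));
    [|rewrite !RtoC_mul; ring].
  do 2 f_equal. rewrite mult_INR, pow_mult, pow_inv. field.
  repeat split; auto; apply pow_nonzero; auto; apply pow_nonzero; auto.
Qed.

Lemma Cseries1_mul_l (a : nat -> CC) c S : Cseries1 a S -> Cseries1 (fun m => Cmul c (a m)) (Cmul c S).
Proof.
  intros HS e He.
  destruct (HS (e / (Cnorm c + 1))) as [N0 HN0].
  { apply Rdiv_lt_0_compat; [lra|]. pose proof (Cnorm_nonneg c). lra. }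
  exists N0. intros N HN. rewrite Csum_map_mul_l.
  replace (Csub (Cmul c (Csum (map a (seq 1 N)))) (Cmul c S)) with (Cmul c (Csub (Csum (map a (seq 1 N))) S))
    by ring.
  rewrite Cnorm_mul. specialize (HN0 N HN). pose proof (Cnorm_nonneg c).
  pose proof (Cnorm_nonneg (Csub (Csum (map a (seq 1 N))) S)).
  apply Rle_lt_trans with ((Cnorm c + 1) * Cnorm (Csub (Csum (map a (seq 1 N))) S)); [nra|].
  apply Rmult_lt_reg_l with (/ (Cnorm c + 1)); [apply Rinv_0_lt_compat; lra|].
  rewrite <- Rmult_assoc, Rinv_l, Rmult_1_l by lra. unfold Rdiv in HN0. lra.
Qed.

Theorem mainTheorem3 (n : nat) (k : nat -> nat) (eps : nat -> R) (psi : CC) :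
  (2 <= n)%nat ->
  (forall i, (i < n)%nat -> (0 < k i)%nat) ->
  fold_right Rplus 0 (map (fun i => / INR (k i)) (seq 0 n)) = 1 ->
  (forall j, (j < n - 1)%nat -> 0 < eps j) ->
  psi <> Czero ->
  let K := lcmk n k in
  let xi := Cinv psi in
  (exists s : R,
      is_lub (fun r => exists x : nat -> CC,
                  (forall j, (j < n - 1)%nat -> Cnorm (x j) = eps j) /\
                  r = Cnorm (Pratio n k x)) s
      /\ Cnorm xi * s < 1) ->
  forall L : CC, Cexp L = psi ->
  exists A : CC,
    torus_integral_is (n - 1) eps
      (fun x => Cadd L (CLog (Csub Cone (Cmul xi (Pratio n k x))))) A /\
    let Mt := Cexp (Copp A) in
    (exists S : CC,
        Cseries1 (fun m => Cdiv (Cmul (RtoC (cm n k m)) (Cpow xi m))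
                                (RtoC (INR m * INR K ^ m))) S
        /\ Mt = Cmul xi (Cexp S)) /\
    (let z := Cdiv (Cpow xi K) (RtoC (INR K ^ K)) in
     exists S' : CC,
        Cseries1 (fun m => Cdiv (Cmul (RtoC (dm n k m)) (Cpow z m)) (RtoC (INR m))) S'
        /\ Cdiv (Cpow Mt K) (RtoC (INR K ^ K)) = Cmul z (Cexp S')).
Proof.
  intros Hn Hk Hsum Heps Hpsi K xi [s [Hlub Hs]] L HL.
  destruct (log_coef_summable n k eps xi s Hn Hk Hsum Heps Hlub Hs) as [Sigma HSigma].
  exists (Cadd L (Copp Sigma)). split; [eapply torus_integral_CLog; eauto|].
  intros Mt.
  assert (HMt : Mt = Cmul xi (Cexp Sigma)).
  { unfold Mt, xi. rewrite <- HL, <- Cexp_opp, <- Cexp_add. f_equal. ring. }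
  split; [exists Sigma; split; auto|].
  intros z. exists (Cmul (RtoC (INR K)) Sigma). split.
  - apply (Cseries1_ext (fun j => Cmul (RtoC (INR K)) (log_coef n k xi (K * j)))).
    + intros j Hj. symmetry. now apply dm_term_log_coef.
    + apply (Cseries1_mul_block (fun m => Cmul (RtoC (INR K)) (log_coef n k xi m))).
      * now apply lcmk_pos.
      * intros m Hm. rewrite log_coef_not_multiple by auto. ring.
      * now apply Cseries1_mul_l.
  - rewrite HMt, Cpow_mul, Cexp_pow. unfold z, Cdiv. ring.
Qed.
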